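(* Let $p\ge 1$, $\varepsilon>0$ and integers $k,l\ge 1$. There exists an integer $N\ge 1$ such that for every linear subspace $F$ of $\ell_p^N$ with $\dim F\ge N-k$, there exist $l$ vectors $y_1,\dots,y_l\in\ell_p^N$ of norm one, with pairwise disjoint supports, such that $\operatorname{dist}(y_j,F)\le\varepsilon$ for $1\le j\le l$.
   Context: $\ell_p^N$ is $\mathbb{R}^N$ with the norm $\|x\|_p=(\sum_{i=1}^N|x_i|^p)^{1/p}$; the support of $x$ is $\{i: x_i\neq 0\}$; distances are measured in $\|\cdot\|_p$. *)

From HB Require Import structures.
From mathcomp Require Import all_boot all_order all_algebra.
From mathcomp Require Import all_classical all_reals.
From mathcomp Require Import exp.
Set Implicit Arguments. Unset Strict Implicit. Unset Printing Implicit Defensive.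
Import Order.TTheory GRing.Theory Num.Theory.
Local Open Scope ring_scope.
Local Open Scope classical_set_scope.

Definition lpnorm (R : realType) (p : R) (N : nat) (x : 'rV[R]_N) : R :=
  (\sum_(i < N) `|x ord0 i| `^ p) `^ (p^-1).

Definition lpdist (R : realType) (p : R) (N : nat) (y : 'rV[R]_N)
  (F : {vspace 'rV[R]_N}) : R :=
  inf [set lpnorm p (y - z) | z in [set z | z \in F]].

Definition supp (R : realType) (N : nat) (x : 'rV[R]_N) : {set 'I_N} :=
  [set i | x ord0 i != 0].

From HB Require Import structures.
From mathcomp Require Import all_boot all_order all_algebra.
From mathcomp Require Import all_classical all_reals.
From mathcomp Require Import exp.
From mathcomp Require Import zify.
Import Order.TTheory GRing.Theory Num.Theory.
Local Open Scope ring_scope.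

(* Take N = l (k + 1) and cut the coordinates into l consecutive blocks of
   k + 1 coordinates.  A subspace F of codimension at most k meets each block
   subspace (of dimension k + 1) nontrivially, so each block contains a unit
   vector lying in F itself; vectors in different blocks have disjoint
   supports, and their distance to F is 0 (so neither k >= 1 nor the size of
   eps matters). *)

Lemma capv_neq0 (K : fieldType) (vT : vectType K) (U V : {vspace vT}) :
  (\dim {:vT} < \dim U + \dim V)%N -> (U :&: V != 0)%VS.
Proof.
move=> hdim; rewrite -dimv_eq0 -lt0n.
have := dimv_sum_cap U V; have := dimvS (subvf (U + V)); lia.
Qed.

Section Blocks.
Variables (K : fieldType) (m N : nat).

Definition block_embed (j : nat) (x : 'rV[K]_m.+1) : 'rV[K]_N :=
  \row_i (if (i %/ m.+1 == j)%N then x ord0 (inord (i %% m.+1)) else 0).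

Lemma block_embed_is_linear j : linear (block_embed j).
Proof.
move=> a u v; apply/rowP => i; rewrite !mxE.
by case: ifP => _; rewrite ?mulr0 ?addr0 // !mxE.
Qed.

HB.instance Definition _ j := GRing.isLinear.Build K 'rV[K]_m.+1 'rV[K]_N _
  (block_embed j) (block_embed_is_linear j).

Lemma block_embed_inj j : (j < N %/ m.+1)%N -> injective (block_embed j).
Proof.
move=> hj u v /rowP huv; apply/rowP => t.
have hi : (j * m.+1 + t < N)%N.
  have : (j.+1 * m.+1 <= N)%N by rewrite -leq_divRL.
  by rewrite mulSn; apply: leq_trans; rewrite addnC ltn_add2r.
have := huv (Ordinal hi); rewrite !mxE /= divnMDl // divn_small // addn0 eqxx.
by rewrite modnMDl modn_small // inord_val.
Qed.

Definition blockv (j : nat) : {vspace 'rV[K]_N} :=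
  limg (linfun (block_embed j)).

Lemma dim_blockv j : (j < N %/ m.+1)%N -> \dim (blockv j) = m.+1.
Proof.
move=> hj; have /eqP ker0 : lker (linfun (block_embed j)) == 0%VS.
  by apply/lker0P => u v; rewrite !lfunE; apply: block_embed_inj.
by rewrite /blockv limg_dim_eq ?ker0 ?capv0 // dimvf dim_matrix mul1r.
Qed.

Lemma blockv_coord j x (i : 'I_N) :
  x \in blockv j -> (i %/ m.+1 != j)%N -> x ord0 i = 0.
Proof.
by case/memv_imgP => u _ -> /negbTE hij; rewrite lfunE mxE hij.
Qed.

End Blocks.

Arguments blockv_coord {K m N j x i}.

Lemma supp_blockv_disjoint (R : realType) (m N j1 j2 : nat) (x1 x2 : 'rV[R]_N) :
  j1 != j2 -> x1 \in blockv R m N j1 -> x2 \in blockv R m N j2 ->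
  [disjoint supp x1 & supp x2].
Proof.
move=> hj x1B x2B; apply/pred0P => i /=; rewrite !inE.
have [hi1|hi1] := eqVneq (i %/ m.+1)%N j1.
  by rewrite (blockv_coord x2B) ?hi1 // eqxx andbF.
by rewrite (blockv_coord x1B hi1) eqxx.
Qed.

Section Norm.
Variables (R : realType) (p : R) (N : nat).
Hypothesis p_neq0 : p != 0.

Lemma lpnorm_ge0 (x : 'rV[R]_N) : 0 <= lpnorm p x.
Proof. exact: powR_ge0. Qed.

Lemma lpnorm0 : lpnorm p (0 : 'rV[R]_N) = 0.
Proof.
rewrite /lpnorm big1 ?powR0 ?invr_eq0 // => i _.
by rewrite mxE normr0 powR0.
Qed.

Lemma lpnorm_gt0 {x : 'rV[R]_N} : x != 0 -> 0 < lpnorm p x.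
Proof.
move=> x_neq0; have [i xi_neq0] : exists i, x ord0 i != 0.
  apply/existsP; apply: contraR x_neq0; rewrite negb_exists => /forallP x0.
  by apply/eqP/rowP => i; rewrite mxE; apply/eqP/negbNE/x0.
apply: powR_gt0; rewrite (bigD1 i) //=.
by rewrite ltr_pwDl ?powR_gt0 ?normr_gt0 // sumr_ge0 // => ? _; apply: powR_ge0.
Qed.

Lemma lpnormZ (c : R) (x : 'rV[R]_N) :
  0 <= c -> lpnorm p (c *: x) = c * lpnorm p x.
Proof.
move=> c_ge0; rewrite /lpnorm.
under eq_bigr => i _ do rewrite mxE normrM ger0_norm // powRM //.
rewrite -mulr_sumr powRM ?powR_ge0 ?sumr_ge0 // => [|? _]; last exact: powR_ge0.
by rewrite -powRrM divff // powRr1.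
Qed.

Lemma lpnorm_normalize (x : 'rV[R]_N) :
  x != 0 -> lpnorm p ((lpnorm p x)^-1 *: x) = 1.
Proof.
move=> x_neq0; have nx_gt0 := lpnorm_gt0 x_neq0.
by rewrite lpnormZ ?invr_ge0 ?ltW // mulVf ?gt_eqF.
Qed.

Lemma lpdist_memv (y : 'rV[R]_N) (F : {vspace 'rV[R]_N}) :
  y \in F -> lpdist p y F = 0.
Proof.
move=> yF; have lb0 : lbound [set lpnorm p (y - z) | z in [set z | z \in F]] 0.
  by move=> _ [z _ <-]; apply: lpnorm_ge0.
apply/le_anti; apply/andP; split.
  by apply: ge_inf; [exists 0 | exists y; rewrite // subrr lpnorm0].
by apply: lb_le_inf lb0; exists (lpnorm p (y - y)), y.
Qed.

End Norm.

Theorem lemmaV2 (R : realType) (p eps : R) (k l : nat) :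
  1 <= p -> 0 < eps -> (1 <= k)%N -> (1 <= l)%N ->
  exists N : nat, (1 <= N)%N /\
    forall F : {vspace 'rV[R]_N}, (N - k <= \dim F)%N ->
      exists y : 'I_l -> 'rV[R]_N,
        (forall j, lpnorm p (y j) = 1) /\
        (forall i j, i != j -> [disjoint supp (y i) & supp (y j)]) /\
        (forall j, lpdist p (y j) F <= eps).
Proof.
move=> p_ge1 eps_gt0 _ l_gt0.
have p_neq0 : p != 0 by rewrite gt_eqF ?(lt_le_trans ltr01).
exists (l * k.+1)%N; split; first by rewrite muln_gt0 l_gt0.
move=> F dimF; pose B (j : 'I_l) := blockv R k (l * k.+1) j.
have dimB j : \dim (B j) = k.+1 by rewrite dim_blockv // mulnK.
pose v j := vpick (F :&: B j)%VS.
have v_neq0 j : v j != 0.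
  rewrite vpick0 capv_neq0 // dimvf dim_matrix dimB mul1r.
  have : (k.+1 <= l * k.+1)%N by rewrite leq_pmull.
  lia.
have /all_and2 [vF vB] j : v j \in F /\ v j \in B j.
  by apply/memv_capP/memv_pick.
exists (fun j => (lpnorm p (v j))^-1 *: v j); split; [|split].
- by move=> j; apply: lpnorm_normalize.
- move=> i j hij.
  by apply: (@supp_blockv_disjoint R k _ i j _ _ hij); apply: memvZ.
- by move=> j; rewrite lpdist_memv ?ltW // memvZ.
Qed.
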